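(* Let $z_1,z_2,z_3\in\mathbb{C}$ be such that $0<|z_1|\le |z_2|\le |z_3|$. Then \[ |z_1+z_2+z_3| + \left(3-\left|\frac{z_1}{|z_1|}+\frac{z_2}{|z_2|}+\frac{z_3}{|z_3|}\right|\right)|z_1| \le |z_1|+|z_2|+|z_3|. \] *)

From mathcomp Require Import all_boot all_order all_algebra.
From mathcomp Require Export complex.
From mathcomp Require Import reals.

From mathcomp Require Import all_boot all_order all_algebra.
From mathcomp Require Import complex reals.
From mathcomp Require Import ring.
Import Order.TTheory GRing.Theory Num.Theory.
Local Open Scope ring_scope.
Local Open Scope complex_scope.

(* Write z_k = |z_k| u_k with |u_k| = 1 and shrink every z_k to length |z_1|
   along its own direction:
     z_1 + z_2 + z_3 = |z_1| (u_1 + u_2 + u_3) + (z_2 - |z_1| u_2) + (z_3 - |z_1| u_3),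
   where the last two terms have lengths |z_2| - |z_1| and |z_3| - |z_1|.
   The triangle inequality then gives the claim. *)

Section ShrinkAlongDirection.
Variable C : numFieldType.
Implicit Types z a : C.

Lemma norm_divr_norm z : z != 0 -> `|z / `|z| | = 1.
Proof. by move=> nz_z; rewrite normf_div normr_id divff ?normr_eq0. Qed.

Lemma normr_shrink z a : 0 <= a <= `|z| -> `|z - a * (z / `|z|)| = `|z| - a.
Proof.
case/andP=> a_ge0; have [-> | nz_z a_le_z] := eqVneq z 0.
  rewrite normr0 => a_le0; have -> : a = 0 by apply: le_anti; rewrite a_le0.
  by rewrite !(mul0r, mulr0, subr0, normr0).
have -> : z - a * (z / `|z|) = (`|z| - a) * (z / `|z|).
  by rewrite mulrBl [`|z| * _]mulrC divfK ?normr_eq0.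
by rewrite normrM norm_divr_norm // mulr1 ger0_norm // subr_ge0.
Qed.

End ShrinkAlongDirection.

Theorem mainTheorem2 (R : realType) (z1 z2 z3 : R[i])
  (h0 : 0 < `|z1|) (h12 : `|z1| <= `|z2|) (h23 : `|z2| <= `|z3|) :
  `|z1 + z2 + z3| + (3 - `|z1 / `|z1| + z2 / `|z2| + z3 / `|z3| |) * `|z1|
    <= `|z1| + `|z2| + `|z3|.
Proof.
have a_ge0 := ltW h0; have h13 := le_trans h12 h23.
set a := `|z1| in h12 h13 a_ge0 *.
set u := z1 / a + z2 / `|z2| + z3 / `|z3|.
have z1E : z1 = a * (z1 / a) by rewrite mulrC divfK ?gt_eqF.
have sumE : z1 + z2 + z3 = a * u + (z2 - a * (z2 / `|z2|)) + (z3 - a * (z3 / `|z3|)).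
  by rewrite /u {1}z1E; ring.
have tri : `|z1 + z2 + z3| <= a * `|u| + (`|z2| - a) + (`|z3| - a).
  rewrite sumE; apply: le_trans (ler_normD _ _) _.
  apply: lerD; last by rewrite normr_shrink ?a_ge0.
  apply: le_trans (ler_normD _ _) _.
  apply: lerD; last by rewrite normr_shrink ?a_ge0.
  by rewrite normrM ger0_norm.
rewrite -lerBrDr.
have -> : a + `|z2| + `|z3| - (3 - `|u|) * a = a * `|u| + (`|z2| - a) + (`|z3| - a).
  by ring.
exact: tri.
Qed.
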